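(* Let $G=(V,E)$ be a graph and $v\in V$. Then $v\in\mathrm{core}(G)$ if and only if one of the following holds: (1) $v$ is isolated; (2) $\gamma(G-v)>\gamma(G)$; (3) $\gamma(G-v)=\gamma(G)$ and every neighbor $w\in N(v)$ satisfies $w\in\mathrm{anticore}(G-v)$.
   Context: All graphs are finite, simple and undirected. $N(v)$ is the set of neighbors of $v$. $\gamma(G)$ is the domination number (minimum size of a dominating set); a minimum dominating set (mds) is a dominating set of size $\gamma(G)$. For a graph $H$, $\mathrm{core}(H)$ is the set of vertices belonging to every mds of $H$, $\mathrm{corona}(H)$ the set of vertices belonging to at least one mds of $H$, and $\mathrm{anticore}(H)=V(H)\setminus\mathrm{corona}(H)$. $G-v$ is the graph obtained by deleting $v$. A vertex is isolated if it has no neighbors. *)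

(* A finite simple graph is a finType T of vertices with a
   symmetric irreflexive adjacency relation e : rel T. *)
From mathcomp Require Import all_boot.
Set Implicit Arguments. Unset Strict Implicit. Unset Printing Implicit Defensive.

Section Domination.
Variables (T : finType) (e : rel T).

Definition dominating (D : {set T}) : bool :=
  [forall x, (x \in D) || [exists y in D, e x y]].

(* domination number: minimum size of a dominating set (setT is dominating). *)
Definition gamma : nat :=
  \big[minn/#|T|]_(D : {set T} | dominating D) #|D|.

Definition mds (D : {set T}) : bool := dominating D && (#|D| == gamma).

Definition in_core (v : T) : bool := [forall D : {set T}, mds D ==> (v \in D)].
Definition in_corona (v : T) : bool := [exists D : {set T}, mds D && (v \in D)].
Definition in_anticore (v : T) : bool := ~~ in_corona v.

Definition isolated (v : T) : bool := [forall w, ~~ e v w].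
End Domination.

Definition delV (T : finType) (v : T) : finType := {x : T | x != v}.
Definition del_rel (T : finType) (e : rel T) (v : T) : rel (delV v) :=
  fun x y => e (val x) (val y).

(* A vertex v lies outside the core exactly when some minimum dominating set D
   avoids it.  Such a D must contain a neighbour w of v, and its restriction to
   G - v still dominates, so gamma(G - v) <= gamma(G), with equality making D an
   mds of G - v that puts w in the corona of G - v.  Conversely, if v has a
   neighbour w, then w together with an mds of G - v dominates G: when
   gamma(G - v) < gamma(G) this is already small enough, and when
   gamma(G - v) = gamma(G) with w in the corona of G - v, an mds of G - v through
   w dominates G by itself; either way we get an mds of G avoiding v. *)
From mathcomp Require Import all_boot.

Set Implicit Arguments. Unset Strict Implicit. Unset Printing Implicit Defensive.

Section Domination.
Variables (T : finType) (e : rel T).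

Lemma gamma_le_card (D : {set T}) : dominating e D -> gamma e <= #|D|.
Proof.
move=> domD; rewrite /gamma.
have : D \in index_enum {set T} by rewrite mem_index_enum.
elim: (index_enum _) => [//|A s IHs]; rewrite inE big_cons.
case/orP=> [/eqP <- | Ds]; first by rewrite domD geq_minl.
by case: (dominating e A) => //=; rewrite ?geq_min IHs ?orbT.
Qed.

Lemma mds_exists : exists D, mds e D.
Proof.
apply: (big_ind (fun m => exists D, dominating e D && (#|D| == m))).
- by exists setT; rewrite cardsT eqxx andbT; apply/forallP => x; rewrite in_setT.
- by move=> a b [Da DaP] [Db DbP]; case: (leqP a b) => _; [exists Da | exists Db].
- by move=> D domD; exists D; rewrite domD eqxx.
Qed.

Lemma mds_of_card_le (D : {set T}) : dominating e D -> #|D| <= gamma e -> mds e D.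
Proof. by move=> domD leD; rewrite /mds domD eqn_leq leD gamma_le_card. Qed.

Lemma in_corePn (v : T) :
  reflect (exists2 D, mds e D & v \notin D) (~~ in_core e v).
Proof.
apply: (iffP forallPn) => [[D] | [D mdsD vD]].
  by rewrite negb_imply => /andP[]; exists D.
by exists D; rewrite negb_imply mdsD.
Qed.

Lemma dominated_by (D : {set T}) (v : T) :
  dominating e D -> v \notin D -> exists2 w, w \in D & e v w.
Proof.
move=> domD vD; case/orP: (forallP domD v) => [vD' | /existsP[w /andP[wD evw]]].
  by rewrite vD' in vD.
by exists w.
Qed.

End Domination.

Section VertexDeletion.
Variables (T : finType) (e : rel T) (v : T).

Local Notation G' := (@del_rel T e v).

Definition lift_del (D : {set delV v}) : {set T} := val @: D.
Definition restr_del (D : {set T}) : {set delV v} := [set x | val x \in D].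

Lemma card_lift_del D : #|lift_del D| = #|D|.
Proof. exact/card_imset/val_inj. Qed.

Lemma notin_lift_del D : v \notin lift_del D.
Proof. by apply/imsetP => -[x _ /eqP]; rewrite eq_sym (negbTE (valP x)). Qed.

Lemma mem_lift_del D (x : delV v) : (val x \in lift_del D) = (x \in D).
Proof. exact/mem_imset/val_inj. Qed.

Lemma lift_restr_del (D : {set T}) : v \notin D -> lift_del (restr_del D) = D.
Proof.
move=> vD; apply/setP => y; apply/imsetP/idP => [[x] | yD].
  by rewrite inE => xD ->.
have yv : y != v by apply: contraNneq vD => <-.
by exists (Sub y yv : delV v); rewrite ?inE.
Qed.

Lemma card_restr_del (D : {set T}) : v \notin D -> #|restr_del D| = #|D|.
Proof. by move=> vD; rewrite -card_lift_del lift_restr_del. Qed.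

Lemma mem_restr_del (D : {set T}) (x : delV v) : (x \in restr_del D) = (val x \in D).
Proof. by rewrite inE. Qed.

(* Only v may lose its dominator when we go back to G, hence the neighbour w. *)
Lemma dominating_lift_del (D : {set delV v}) (w : T) :
  dominating G' D -> e v w -> dominating e (w |: lift_del D).
Proof.
move=> domD evw; apply/forallP => x; case: (eqVneq x v) => [-> | xv].
  by apply/orP; right; apply/existsP; exists w; rewrite setU11.
case/orP: (forallP domD (Sub x xv)) => [xD | /existsP[y /andP[yD exy]]].
  by rewrite in_setU1 -[x]/(val (Sub x xv : delV v)) mem_lift_del xD !orbT.
by apply/orP; right; apply/existsP; exists (val y); rewrite in_setU1 mem_lift_del yD orbT.
Qed.

Lemma dominating_restr_del (D : {set T}) :
  v \notin D -> dominating e D -> dominating G' (restr_del D).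
Proof.
move=> vD domD; apply/forallP => x.
case/orP: (forallP domD (val x)) => [xD | /existsP[y /andP[yD exy]]].
  by rewrite mem_restr_del xD.
have yv : y != v by apply: contraNneq vD => <-.
by apply/orP; right; apply/existsP; exists (Sub y yv); rewrite mem_restr_del yD.
Qed.

Lemma gamma_del_le_card (D : {set T}) :
  v \notin D -> dominating e D -> gamma G' <= #|D|.
Proof.
by move=> vD domD; rewrite -card_restr_del // gamma_le_card ?dominating_restr_del.
Qed.

Lemma corona_del_of_mds (D : {set T}) (w : delV v) :
  mds e D -> v \notin D -> gamma G' = gamma e -> val w \in D -> in_corona G' w.
Proof.
case/andP=> domD /eqP cardD vD eq_gamma wD; apply/existsP; exists (restr_del D).
by rewrite mem_restr_del wD /mds dominating_restr_del // card_restr_del // cardD eq_gamma eqxx.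
Qed.

Hypothesis e_irr : irreflexive e.

Lemma mds_avoiding_of_gamma_del_lt (w : T) :
  e v w -> gamma G' < gamma e -> exists2 D, mds e D & v \notin D.
Proof.
move=> evw lt_gamma; have [D' /andP[domD' /eqP cardD']] := mds_exists G'.
have wv : w != v by apply: contraTneq evw => ->; rewrite e_irr.
exists (w |: lift_del D'); last by rewrite in_setU1 eq_sym (negbTE wv) notin_lift_del.
apply: mds_of_card_le; first exact: dominating_lift_del.
by rewrite cardsU1 card_lift_del cardD' (leq_trans _ lt_gamma) // -add1n leq_add2r leq_b1.
Qed.

Lemma mds_avoiding_of_corona_del (w : delV v) :
  e v (val w) -> gamma G' = gamma e -> in_corona G' w ->
  exists2 D, mds e D & v \notin D.
Proof.
move=> evw eq_gamma /existsP[D' /andP[/andP[domD' /eqP cardD'] wD']].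
have := dominating_lift_del domD' evw.
have /setUidPr -> : [set val w] \subset lift_del D' by rewrite sub1set mem_lift_del.
move=> domD.
exists (lift_del D'); last exact: notin_lift_del.
by apply: mds_of_card_le; rewrite // card_lift_del cardD' eq_gamma.
Qed.

End VertexDeletion.

Theorem theorem5 (T : finType) (e : rel T)
  (e_sym : symmetric e) (e_irr : irreflexive e) (v : T) :
  in_core e v <->
  [\/ isolated e v,
      gamma (@del_rel T e v) > gamma e
    | gamma (@del_rel T e v) = gamma e /\
      (forall w : delV v, e v (val w) -> in_anticore (@del_rel T e v) w)].
Proof.
split=> [core_v | ].
  have avoid_absurd : ~ exists2 D, mds e D & v \notin D.
    by move/in_corePn; rewrite core_v.
  have [isolated_v | /forallPn[w /negPn evw]] := boolP (isolated e v).
    exact: Or31.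
  case: (ltngtP (gamma e) (gamma (@del_rel T e v))) => [lt_gamma | gt_gamma | eq_gamma].
  - exact: Or32.
  - by case: avoid_absurd; apply: (mds_avoiding_of_gamma_del_lt e_irr evw).
  - apply: Or33; split=> // w' evw'; apply/negP => corona_w'.
    by case: avoid_absurd; apply: (mds_avoiding_of_corona_del evw').
move=> cases; apply/negPn/in_corePn => -[D mdsD vD].
have /andP[domD /eqP cardD] := mdsD; have [w wD evw] := dominated_by domD vD.
case: cases => [/forallP/(_ w) | | [eq_gamma anticore]].
- by rewrite evw.
- by rewrite ltnNge -cardD gamma_del_le_card.
- have wv : w != v by apply: contraNneq vD => <-.
  by move: (anticore (Sub w wv) evw); rewrite /in_anticore (corona_del_of_mds mdsD).
Qed.
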